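(* Let $Q\in S$ be nonzero and $\mathbf u\in\mathbb Z^n_{>0}$. The following are equivalent: (1) $Q$ is quasi-homogeneous with respect to $\mathbf u$, i.e. $Q\in(S^{\mathbf u})_d$ for some $d$; (2) for every $\mathbf v\in\mathbb Z^n$ such that $\mathbf u+\mathbf v=(k,\dots,k)$ for some $k\in\mathbb Z$, $D(Q)$ is a graded $S^{\mathbf u}$-submodule of $D^{(\mathbf u,\mathbf v)}$ (i.e. all homogeneous components of every element of $D(Q)$ belong to $D(Q)$).
   Context: $\mathbb K$ a field of characteristic zero, $S=\mathbb K[x_1,\dots,x_n]$, $D=\mathrm{Der}_{\mathbb K}(S)$ with basis $\partial_i=\partial/\partial x_i$. For $g\in S$, $e\ge1$: $D(g;e)=\{\delta\in D:\delta(g)\in g^eS\}$; for nonzero $f=cf_1^{e_1}\cdots f_r^{e_r}$ (pairwise non-associate irreducibles, $c\in\mathbb K^*$), $D(f)=\bigcap_iD(f_i;e_i)$. $S^{\mathbf u}$ is $S$ with grading $\deg x_i=u_i$; $D^{(\mathbf u,\mathbf v)}$ is $D$ graded by $\deg(a\partial_i)=\deg^{\mathbf u}(a)+v_i$ for $\mathbf u$-homogeneous $a$. *)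

From HB Require Import structures.
From mathcomp Require Import all_boot all_order all_algebra.
From mathcomp Require Export mpoly.
Set Implicit Arguments. Unset Strict Implicit. Unset Printing Implicit Defensive.
Import Order.TTheory GRing.Theory Num.Theory.
Local Open Scope ring_scope.

Section Defs.
Variables (K : fieldType) (n : nat).
Local Notation S := {mpoly K[n]}.

(* A derivation delta = sum_i a_i d_i of S is represented by its coefficient
   family (a_i)_i on the basis d_i = d/dx_i. *)
Definition der := 'I_n -> S.

Definition der_app (delta : der) (g : S) : S :=
  \sum_(i < n) delta i * mderiv i g.

Definition mdvd (a b : S) : Prop := exists c : S, b = c * a.

Definition mirreducible (p : S) : Prop :=
  p != 0 /\ p \isn't a GRing.unit /\
  forall a b : S, p = a * b -> a \is a GRing.unit \/ b \is a GRing.unit.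

Definition inDge (g : S) (e : nat) (delta : der) : Prop :=
  mdvd (g ^+ e) (der_app delta g).

(* D(f) = intersection of D(f_i;e_i) over the irreducible factors f_i of f,
   e_i being the exact multiplicity of f_i in f. *)
Definition inDf (f : S) (delta : der) : Prop :=
  forall (p : S) (e : nat), mirreducible p -> (0 < e)%N ->
    mdvd (p ^+ e) f -> ~ mdvd (p ^+ e.+1) f -> inDge p e delta.

Definition wdeg (u : 'I_n -> int) (m : 'X_{1..n}) : int :=
  \sum_(i < n) u i * (m i)%:Z.

Definition is_wHomog (u : 'I_n -> int) (d : int) (Q : S) : Prop :=
  forall m : 'X_{1..n}, m \in msupp Q -> wdeg u m = d.

Definition wcomp (u : 'I_n -> int) (d : int) (p : S) : S :=
  \sum_(m <- msupp p | wdeg u m == d) p@_m *: 'X_[m].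

(* homogeneous component of degree d of delta in D^(u,v):
   deg(a d_i) = deg^u(a) + v_i *)
Definition der_comp (u v : 'I_n -> int) (d : int) (delta : der) : der :=
  fun i => wcomp u (d - v i) (delta i).

Definition graded_DQ (u v : 'I_n -> int) (Q : S) : Prop :=
  forall delta : der, inDf Q delta ->
    forall d : int, inDf Q (der_comp u v d delta).
End Defs.

From mathcomp Require Import all_boot all_order all_algebra.
From mathcomp Require Import mpoly zify.
From Stdlib Require Import Classical.
Set Implicit Arguments. Unset Strict Implicit. Unset Printing Implicit Defensive.
Import Order.TTheory GRing.Theory Num.Theory.
Local Open Scope ring_scope.

(* Substituting [x_i := t^(u_i) x_i] turns a polynomial [p] into a polynomial
   in [t] whose coefficients are the weighted homogeneous components of [p].
   The width of that polynomial (highest minus lowest degree) is additive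
   under products and vanishes exactly on homogeneous [p].

   If [Q] is homogeneous, so are its factors [f] and their partial
   derivatives; when [u + v] is constant, taking the degree-[d] component of
   [delta(f) = c * f^e] gives [delta_d(f) = c_d' * f^e].

   If [Q] is not homogeneous, it has a non-homogeneous irreducible factor [f]
   of exact multiplicity [e]. With [v = -u], the derivation [Q * E], for the
   weighted Euler derivation [E], lies in [D(Q)], so its top component
   [Q_T * E] does too and [f] divides [Q_T * (E(f) - top(f) * f)]. In
   characteristic 0, [E - top(f)] keeps the bottom component of [f] and kills
   its top one, so this product has smaller width than [f]: contradiction. *)

Section PolyValuation.
Variable R : idomainType.
Implicit Types P A : {poly R}.

Definition pval P : nat := find (predC1 0) P.

Definition pwidth P : nat := ((size P).-1 - pval P)%N.

Lemma coef_lt_pval P i : (i < pval P)%N -> P`_i = 0.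
Proof. by move=> lt_ip; apply/eqP/negbFE; apply: (before_find 0 lt_ip). Qed.

Lemma coef_pval_eq0 P : (P`_(pval P) == 0) = (P == 0).
Proof.
have [->|nzP] := eqVneq P 0; first by rewrite coef0 eqxx.
suff /(nth_find 0) : has (predC1 0) P by move/negbTE.
apply/hasP; exists (lead_coef P); last by rewrite /= lead_coef_eq0.
by rewrite lead_coefE mem_nth // prednK ?size_poly_gt0.
Qed.

Lemma pval_leq P i : P`_i != 0 -> (pval P <= i)%N.
Proof. by move=> nzPi; rewrite leqNgt; apply: contra nzPi => /coef_lt_pval ->. Qed.

Lemma coef_neq0_lt_size P i : P`_i != 0 -> (i < size P)%N.
Proof. by rewrite ltnNge; apply: contra => le_Pi; rewrite nth_default. Qed.

Lemma leq_pval_size P : (pval P <= (size P).-1)%N.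
Proof.
have [->|nzP] := eqVneq P 0; first by rewrite /pval polyseq0.
by rewrite -ltnS prednK ?size_poly_gt0 // coef_neq0_lt_size ?coef_pval_eq0.
Qed.

Lemma pval_eq P i : P`_i != 0 -> (forall j, (j < i)%N -> P`_j = 0) -> pval P = i.
Proof.
move=> nzPi Plt; apply/eqP; rewrite eqn_leq pval_leq // leqNgt; apply/negP => lt_pi.
have nzP : P != 0 by apply: contraNneq nzPi => ->; rewrite coef0.
by move: nzP; rewrite -coef_pval_eq0 Plt ?eqxx.
Qed.

Lemma pval_mulXn A a : A`_0 != 0 -> pval (A * 'X^a) = a.
Proof. by move=> nzA0; apply: pval_eq => [|j lt_ja]; rewrite coefMXn ?lt_ja ?ltnn ?subnn. Qed.

Lemma pval_decomp P : P = drop_poly (pval P) P * 'X^(pval P).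
Proof.
rewrite -{1}(poly_take_drop (pval P) P) -[RHS]add0r; congr (_ + _).
by apply/polyP => i; rewrite coef_take_poly coef0; case: ifP => // /coef_lt_pval.
Qed.

Lemma coef0_drop_pval P : ((drop_poly (pval P) P)`_0 == 0) = (P == 0).
Proof. by rewrite coef_drop_poly add0n coef_pval_eq0. Qed.

Lemma pvalM P Q : P != 0 -> Q != 0 -> pval (P * Q) = (pval P + pval Q)%N.
Proof.
move=> nzP nzQ; rewrite {1}(pval_decomp P) {1}(pval_decomp Q) mulrACA -exprD.
by rewrite pval_mulXn // coef0M mulf_neq0 ?coef0_drop_pval.
Qed.

Lemma pwidthM P Q : P != 0 -> Q != 0 -> pwidth (P * Q) = (pwidth P + pwidth Q)%N.
Proof.
move=> nzP nzQ; rewrite /pwidth pvalM // size_mul //.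
have := leq_pval_size P; have := leq_pval_size Q.
have := size_poly_gt0 P; have := size_poly_gt0 Q; rewrite nzP nzQ; lia.
Qed.

End PolyValuation.

Lemma exists_last_true (P : nat -> Prop) m B :
  P m -> (forall k, P k -> (k <= B)%N) -> exists e, [/\ (m <= e)%N, P e & ~ P e.+1].
Proof.
move=> Pm bP; have [d le_d] : exists d, (B - m <= d)%N by exists (B - m)%N.
elim: d m Pm le_d => [|d IH] m Pm le_d.
  by exists m; split=> // Pm1; have := bP _ Pm1; lia.
have [Pm1|NPm1] := classic (P m.+1); last by exists m; split.
have le_d1 : (B - m.+1 <= d)%N by lia.
by have [k [le_mk Pk NPk1]] := IH m.+1 Pm1 le_d1; exists k; split=> //; lia.
Qed.

Section Divisibility.
Variables (K : fieldType) (n : nat).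
Local Notation S := {mpoly K[n]}.
Implicit Types p q a b c : S.

Lemma mdvdMl a b c : mdvd a b -> mdvd a (c * b).
Proof. by case=> d ->; exists (c * d); rewrite mulrA. Qed.

Lemma mdvdMr a b c : mdvd a b -> mdvd a (b * c).
Proof. by move=> dvd_ab; rewrite mulrC; apply: mdvdMl. Qed.

Lemma mdvdB a b c : mdvd a b -> mdvd a c -> mdvd a (b - c).
Proof. by case=> d -> [e ->]; exists (d - e); rewrite mulrBl. Qed.

Lemma unit_mpolyCE p : p \is a GRing.unit -> p = (p@_0)%:MP.
Proof. by case/andP=> /eqP. Qed.

Lemma mpolyC_unit (c : K) : c != 0 -> (c%:MP : S) \is a GRing.unit.
Proof. by move=> nz_c; apply/andP; rewrite mcoeffC eqxx mulr1 unitfE. Qed.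

Lemma msize_gt1 {p} : p != 0 -> p \isn't a GRing.unit -> (1 < msize p)%N.
Proof.
move=> nz_p; apply: contraR; rewrite -leqNgt => /msize1_polyC Ep.
by rewrite Ep mpolyC_unit //; apply: contraNneq nz_p => p00; rewrite Ep p00.
Qed.

Lemma msize_mdvd {a b} : b != 0 -> mdvd a b -> (msize a <= msize b)%N.
Proof.
move=> nz_b [c Eb]; have nz_c : c != 0 by apply: contraNneq nz_b => c0; rewrite Eb c0 mul0r.
have nz_a : a != 0 by apply: contraNneq nz_b => a0; rewrite Eb a0 mulr0.
have gt0_c : (0 < msize c)%N by rewrite lt0n msize_poly_eq0.
by rewrite Eb msizeM // -subn1 -addnBAC // leq_addl.
Qed.

Lemma msize_expr_gt {p} k : (1 < msize p)%N -> (k < msize (p ^+ k))%N.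
Proof.
move=> gt1_p; have nz_p : p != 0 by apply: contraTneq gt1_p => ->; rewrite msize0.
elim: k => [|k IH]; first by rewrite expr0 msize1.
rewrite exprS msizeM ?expf_neq0 //.
by move: gt1_p IH; move: (msize p) (msize (p ^+ k)) => s t; lia.
Qed.

Lemma exists_exact_power p q : q != 0 -> (1 < msize p)%N -> mdvd p q ->
  exists e, [/\ (0 < e)%N, mdvd (p ^+ e) q & ~ mdvd (p ^+ e.+1) q].
Proof.
move=> nz_q gt1_p dvd_pq; apply: (@exists_last_true _ 1 (msize q)); first by rewrite expr1.
move=> k /(msize_mdvd nz_q); have := msize_expr_gt k gt1_p.
by move: (msize _) (msize q) => s t; lia.
Qed.

Lemma reducible_factor q : q != 0 -> q \isn't a GRing.unit -> ~ mirreducible q ->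
  exists a b, [/\ q = a * b, a \isn't a GRing.unit & b \isn't a GRing.unit].
Proof.
move=> nz_q Nunit_q red_q; apply: NNPP => Nab; apply: red_q; split=> //; split=> // a b Eq.
apply: NNPP => Nuab; apply: Nab; exists a, b.
by split=> //; apply/negP => unit_ab; apply: Nuab; [left|right].
Qed.

Lemma exists_irreducible_factor (P : S -> Prop) :
  (forall c : K, c != 0 -> P c%:MP) -> (forall a b, P a -> P b -> P (a * b)) ->
  forall q, q != 0 -> ~ P q -> exists p, [/\ mirreducible p, mdvd p q & ~ P p].
Proof.
move=> PC PM q; elim: {q}(msize q).+1 {-2}q (ltnSn (msize q)) => // k IH q lt_qk nz_q NPq.
have [irr_q|red_q] := classic (mirreducible q).
  by exists q; split=> //; exists 1; rewrite mul1r.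
have Nunit_q : q \isn't a GRing.unit.
  apply: contra_notN NPq => /unit_mpolyCE Eq; rewrite Eq; apply: PC.
  by rewrite -(mpolyC_eq0 n) -Eq.
have [a [b [Eq Nunit_a Nunit_b]]] := reducible_factor nz_q Nunit_q red_q.
have nz_a : a != 0 by apply: contraNneq nz_q => a0; rewrite Eq a0 mul0r.
have nz_b : b != 0 by apply: contraNneq nz_q => b0; rewrite Eq b0 mulr0.
have := msize_gt1 nz_a Nunit_a; have := msize_gt1 nz_b Nunit_b.
move: lt_qk; rewrite Eq msizeM // => lt_abk gt1_b gt1_a.
have [lt_ak lt_bk] : (msize a < k)%N /\ (msize b < k)%N.
  by move: (msize a) (msize b) lt_abk gt1_a gt1_b => s t; lia.
have [Pa|NPa] := classic (P a).
  have NPb : ~ P b by move=> Pb; apply: NPq; rewrite Eq; apply: PM.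
  have [p [irr_p dvd_pb NPp]] := IH b lt_bk nz_b NPb.
  by exists p; split=> //; apply: mdvdMl.
have [p [irr_p dvd_pa NPp]] := IH a lt_ak nz_a NPa.
by exists p; split=> //; apply: mdvdMr.
Qed.

End Divisibility.

Section WeightedEmbedding.
Variables (K : fieldType) (n : nat) (u : 'I_n -> int) (w : 'I_n -> nat).
Hypothesis u_nat : forall i, u i = (w i)%:Z.
Local Notation S := {mpoly K[n]}.
Implicit Types (p q : S) (m : 'X_{1..n}).

Definition wdegn m : nat := (\sum_(i < n) w i * m i)%N.

Lemma wdegE m : wdeg u m = (wdegn m)%:Z.
Proof.
rewrite /wdeg /wdegn (big_morph Posz PoszD (erefl 0%:Z)).
by apply: eq_bigr => i _; rewrite PoszM u_nat.
Qed.

Lemma wdegnD m1 m2 : wdegn (m1 + m2) = (wdegn m1 + wdegn m2)%N.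
Proof. by rewrite /wdegn -big_split; apply: eq_bigr => i _; rewrite mnmDE mulnDr. Qed.

Lemma wdegnU i : wdegn U_(i) = w i.
Proof.
rewrite /wdegn (bigD1 i) //= big1 ?addn0; first by rewrite mnm1E eqxx muln1.
by move=> j /negbTE ji; rewrite mnm1E eq_sym ji muln0.
Qed.

(* [wemb p] is [p(t^(w_1) x_1, ..., t^(w_n) x_n)] seen as a polynomial in [t]
   over [S]. *)
Definition wemb_scalar : {rmorphism K -> {poly S}} := (polyC \o (@mpolyC n K))%FUN.
Definition wemb_var (i : 'I_n) : {poly S} := ('X_i)%:P * 'X^(w i).
(* Sealed: letting unification unfold [mmap] is prohibitively slow. *)
Fact wemb_key : unit. Proof. by []. Qed.
Definition wemb p : {poly S} := locked_with wemb_key (mmap wemb_scalar wemb_var) p.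

Lemma wemb_mmap p : wemb p = mmap wemb_scalar wemb_var p.
Proof. by rewrite /wemb; case: wemb_key. Qed.

Lemma wembM p q : wemb (p * q) = wemb p * wemb q.
Proof. by rewrite !wemb_mmap rmorphM. Qed.

Lemma wembMn p k : wemb (p *+ k) = wemb p *+ k.
Proof. by rewrite !wemb_mmap rmorphMn. Qed.

Lemma wembB p q : wemb (p - q) = wemb p - wemb q.
Proof. by rewrite !wemb_mmap rmorphB. Qed.

Lemma wemb_sum (I : Type) (r : seq I) (F : I -> S) :
  wemb (\sum_(i <- r) F i) = \sum_(i <- r) wemb (F i).
Proof. by rewrite wemb_mmap rmorph_sum; apply: eq_bigr => i _; rewrite wemb_mmap. Qed.

Lemma mmap1_wemb_var m : mmap1 wemb_var m = ('X_[m])%:P * 'X^(wdegn m).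
Proof.
rewrite /mmap1 mpolyXE_id rmorph_prod /wdegn -prodrXr -big_split /=.
by apply: eq_bigr => i _; rewrite exprMn rmorphXn -exprM.
Qed.

Lemma wemb_monomial (c : K) m : wemb (c *: 'X_[m]) = (c *: 'X_[m])%:P * 'X^(wdegn m).
Proof. by rewrite wemb_mmap mmapZ mmapX mmap1_wemb_var /= mulrA -polyCM mul_mpolyC. Qed.

Lemma wembE p : wemb p = \sum_(m <- msupp p) (p@_m *: 'X_[m])%:P * 'X^(wdegn m).
Proof. by rewrite {1}[p]mpolyE wemb_sum; apply: eq_bigr => m _; rewrite wemb_monomial. Qed.

Lemma coef_wemb (N : nat) p : (wemb p)`_N = wcomp u N p.
Proof.
rewrite wembE coef_sum /wcomp [RHS]big_mkcond /=; apply: eq_bigr => m _.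
rewrite coefCM coefXn wdegE eqz_nat eq_sym.
by case: eqP => _; rewrite ?mulr1 ?mulr0.
Qed.

Lemma wcompE d p : wcomp u d p = if d is Posz N then (wemb p)`_N else 0.
Proof. by case: d => [N|k]; rewrite ?coef_wemb // /wcomp big1 // => m; rewrite wdegE. Qed.

Lemma wemb_horner1 p : (wemb p).[1] = p.
Proof.
rewrite wembE horner_sum [RHS]mpolyE; apply: eq_bigr => m _.
by rewrite hornerCM hornerXn expr1n mulr1.
Qed.

Lemma wemb_eq0 p : (wemb p == 0) = (p == 0).
Proof.
apply/idP/idP => [/eqP wp0|/eqP ->]; last by rewrite wemb_mmap rmorph0.
by rewrite -(wemb_horner1 p) wp0 horner0.
Qed.

Lemma mcoeff_wcomp d p m : (wcomp u d p)@_m = if wdeg u m == d then p@_m else 0.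
Proof.
rewrite /wcomp big_mkcond raddf_sum /=.
under eq_bigr => m' _ do rewrite (fun_if (mcoeff m)) mcoeff0 mcoeffZ mcoeffX.
have [mp|mNp] := boolP (m \in msupp p).
  rewrite (bigD1_seq m) ?msupp_uniq //= eqxx mulr1 big1 ?addr0 // => m' /negbTE ->.
  by rewrite mulr0 if_same.
rewrite (memN_msupp_eq0 mNp) if_same big1_seq // => m' /andP[_ m'p].
by rewrite (_ : (m' == m) = false) ?mulr0 ?if_same //; apply: contraNF mNp => /eqP <-.
Qed.

Lemma wcomp_sum d (I : Type) (r : seq I) (F : I -> S) :
  wcomp u d (\sum_(i <- r) F i) = \sum_(i <- r) wcomp u d (F i).
Proof.
apply/mpolyP => m; rewrite mcoeff_wcomp !raddf_sum /=.
under [RHS]eq_bigr do rewrite mcoeff_wcomp.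
by case: (wdeg u m == d); rewrite ?big1_eq.
Qed.

Lemma wHomog_wcomp d p : is_wHomog u d (wcomp u d p).
Proof. by move=> m; rewrite mcoeff_msupp mcoeff_wcomp; case: (wdeg u m =P d); rewrite ?eqxx. Qed.

Lemma wHomog_wemb (N : nat) p : is_wHomog u N p <-> wemb p = p%:P * 'X^N.
Proof.
split=> [hom_p|Ep m mp].
  rewrite wembE (eq_big_seq (fun m => (p@_m *: 'X_[m])%:P * 'X^N)); last first.
    by move=> m mp; have := hom_p m mp; rewrite wdegE => -[->].
  by rewrite -mulr_suml -rmorph_sum -mpolyE.
have := mcoeff_wcomp (wdeg u m) p m; rewrite eqxx wcompE wdegE Ep coefCM coefXn.
by case: eqP => [->//|_]; rewrite mulr0 mcoeff0 => /esym/eqP; rewrite mcoeff_eq0 mp.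
Qed.

Lemma wHomog_nat {d p} : p != 0 -> is_wHomog u d p -> exists N : nat, d = N.
Proof.
rewrite -msupp_eq0; case E: (msupp p) => [|m s] // _ hom_p.
by exists (wdegn m); rewrite -wdegE hom_p // E mem_head.
Qed.

Definition wHomogeneous p : Prop := exists d, is_wHomog u d p.

Lemma wHomogeneous_pwidth p : p != 0 -> wHomogeneous p <-> pwidth (wemb p) = 0%N.
Proof.
move=> nz_p; split=> [[d hom_p]|w0].
  have [N dN] := wHomog_nat nz_p hom_p; move: hom_p; rewrite dN => /wHomog_wemb ->.
  by rewrite /pwidth pval_mulXn ?coefC // size_mulXn ?polyC_eq0 // size_polyC nz_p addn1 subnn.
exists (pval (wemb p)) => m mp.
have nz_m : (wemb p)`_(wdegn m) != 0.
  rewrite coef_wemb -wdegE; apply: contraTneq mp => /(congr1 (mcoeff m)).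
  by rewrite mcoeff_wcomp eqxx mcoeff0 => /eqP; rewrite mcoeff_eq0.
have le_pm := pval_leq nz_m.
have lt_ms := coef_neq0_lt_size nz_m.
rewrite wdegE; congr Posz; move: w0 le_pm lt_ms; rewrite /pwidth.
by move: (pval _) (size _) => v s; lia.
Qed.

Lemma wHomog0 d : is_wHomog u d (0 : S).
Proof. by move=> m; rewrite msupp0. Qed.

Lemma wHomogC (c : K) : is_wHomog u 0 (c%:MP : S).
Proof.
move=> m; rewrite msuppC; case: eqP => // _; rewrite inE => /eqP ->.
by rewrite /wdeg big1 // => i _; rewrite mnm0E mulr0.
Qed.

Lemma wHomogM a b p q : is_wHomog u a p -> is_wHomog u b q -> is_wHomog u (a + b) (p * q).
Proof.
have [->|nz_p] := eqVneq p 0; first by rewrite mul0r => _ _; apply: wHomog0.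
have [->|nz_q] := eqVneq q 0; first by rewrite mulr0 => _ _; apply: wHomog0.
move=> hom_p hom_q; have [N aN] := wHomog_nat nz_p hom_p; have [M bM] := wHomog_nat nz_q hom_q.
move: hom_p hom_q; rewrite aN bM -PoszD !wHomog_wemb wembM => -> ->.
by rewrite polyCM exprD mulrACA.
Qed.

Lemma wHomogX d p e : is_wHomog u d p -> is_wHomog u (d * e%:Z) (p ^+ e).
Proof.
move=> hom_p; elim: e => [|e IH].
  by rewrite mulr0 expr0 -mpolyC1; apply: wHomogC.
by rewrite exprSr -addn1 PoszD mulrDr mulr1; apply: wHomogM.
Qed.

Lemma wHomogMn d p k : is_wHomog u d p -> is_wHomog u d (p *+ k).
Proof.
move=> hom_p m; rewrite mcoeff_msupp mcoeffMn => nz; apply: hom_p.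
by rewrite mcoeff_msupp; apply: contraNneq nz => ->; rewrite mul0rn.
Qed.

Lemma wHomog_mpolyXi i : is_wHomog u (u i) ('X_i : S).
Proof. by move=> m; rewrite msuppX inE => /eqP ->; rewrite wdegE wdegnU u_nat. Qed.

Lemma wHomog_mderiv d p i : is_wHomog u d p -> is_wHomog u (d - u i) (mderiv i p).
Proof.
move=> hom_p m; rewrite mcoeff_msupp mcoeff_mderiv => nz.
have mUp : (m + U_(i))%MM \in msupp p.
  by rewrite mcoeff_msupp; apply: contraNneq nz => ->; rewrite mul0rn.
by rewrite -(hom_p _ mUp) !wdegE wdegnD wdegnU PoszD u_nat addrK.
Qed.

Lemma wcomp_mulr_wHomog d e (f h : S) : is_wHomog u e h ->
  wcomp u (d + e) (f * h) = wcomp u d f * h.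
Proof.
have [->|nz_h] := eqVneq h 0; first by rewrite !mulr0 /wcomp msupp0 big_nil.
move=> hom_h; have [M eM] := wHomog_nat nz_h hom_h; subst e.
move/wHomog_wemb: hom_h => wemb_h; rewrite !wcompE wembM wemb_h mulrA; case: d => [N|k].
  by rewrite -PoszD /= coefMXn ltnNge leq_addl /= addnK coefMC.
case E: (Negz k + M%:Z) => [N|k'] //; last by rewrite mul0r.
by rewrite coefMXn (_ : (N < M)%N) ?mul0r //; move: E; rewrite NegzE; lia.
Qed.

Lemma wHomogeneousM p q : wHomogeneous p -> wHomogeneous q -> wHomogeneous (p * q).
Proof. by case=> a hom_p [b hom_q]; exists (a + b); apply: wHomogM. Qed.

Lemma wHomogeneous_factor p q : p * q != 0 -> wHomogeneous (p * q) -> wHomogeneous q.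
Proof.
move=> nz_pq; have nz_p : p != 0 by apply: contraNneq nz_pq => ->; rewrite mul0r.
have nz_q : q != 0 by apply: contraNneq nz_pq => ->; rewrite mulr0.
rewrite (wHomogeneous_pwidth nz_pq) (wHomogeneous_pwidth nz_q) wembM.
by rewrite pwidthM ?wemb_eq0 // => /eqP; rewrite addn_eq0 => /andP[_ /eqP].
Qed.

Definition weuler p : S := \sum_(i < n) ('X_i *+ w i) * mderiv i p.

Lemma weuler_mpolyX m : weuler 'X_[m] = 'X_[m] *+ wdegn m.
Proof.
rewrite /weuler /wdegn -sumrMnr; apply: eq_bigr => i _.
rewrite mderivX scaler_nat mulrnAl mulrnAr -mulrnA mulnC.
have [m0|m_gt0] := posnP (m i); first by rewrite m0 muln0 !mulr0n.
congr (_ *+ _); rewrite -mpolyXD; congr 'X_[_]; apply/mnmP => j.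
rewrite mnmDE mnmBE mnm1E; case: eqP => [<-|_]; last by rewrite subn0.
by rewrite add1n subn1 prednK.
Qed.

Lemma weulerD p q : weuler (p + q) = weuler p + weuler q.
Proof. by rewrite /weuler -big_split; apply: eq_bigr => i _; rewrite mderivD mulrDr. Qed.

Lemma weulerZ (c : K) p : weuler (c *: p) = c *: weuler p.
Proof. by rewrite /weuler scaler_sumr; apply: eq_bigr => i _; rewrite mderivZ scalerAr. Qed.

Lemma weulerE p : weuler p = \sum_(m <- msupp p) (p@_m *: 'X_[m]) *+ wdegn m.
Proof.
have weuler0 : weuler 0 = 0 by rewrite /weuler big1 // => i _; rewrite mderiv0 mulr0.
rewrite {1}[p]mpolyE (big_morph _ weulerD weuler0); apply: eq_bigr => m _.
by rewrite weulerZ weuler_mpolyX scalerMnr.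
Qed.

Lemma coef_wemb_weuler p (N : nat) : (wemb (weuler p))`_N = (wemb p)`_N *+ N.
Proof.
rewrite weulerE wemb_sum wembE !coef_sum -sumrMnl; apply: eq_bigr => m _.
rewrite wembMn wemb_monomial coefMn !coefCM !coefXn.
by case: eqP => [->|_]; rewrite ?mulr0 ?mul0rn.
Qed.

(* [(size (wemb p)).-1] is the top weighted degree of [p]. *)
Definition weuler_shift p : S := weuler p - p *+ (size (wemb p)).-1.

Lemma coef_wemb_weuler_shift p (N : nat) :
  (wemb (weuler_shift p))`_N = (wemb p)`_N *+ N - (wemb p)`_N *+ (size (wemb p)).-1.
Proof. by rewrite /weuler_shift wembB wembMn coefB coefMn coef_wemb_weuler. Qed.

End WeightedEmbedding.

Section Gradedness.
Variables (K : fieldType) (n : nat) (u : 'I_n -> int) (w : 'I_n -> nat).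
Hypothesis u_nat : forall i, u i = (w i)%:Z.
Local Notation S := {mpoly K[n]}.
Local Notation wemb := (wemb w).

Lemma graded_DQ_of_wHomog (Q : S) (d : int) (v : 'I_n -> int) (k : int) :
  Q != 0 -> is_wHomog u d Q -> (forall i, u i + v i = k) -> graded_DQ u v Q.
Proof.
move=> nz_Q hom_Q uv_k delta inD_delta D p e irr_p e_gt0 dvd_pe_Q Ndvd.
have [c Ec] := inD_delta p e irr_p e_gt0 dvd_pe_Q Ndvd.
have [t hom_p] : wHomogeneous u p.
  case: dvd_pe_Q => q Eq; apply: (wHomogeneous_factor u_nat (p := q * p ^+ e.-1)).
    by rewrite -mulrA -exprSr prednK // -Eq.
  by rewrite -mulrA -exprSr prednK // -Eq; exists d.
exists (wcomp u (D - k + t - t * e%:Z) c).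
have comp_term i : wcomp u (D - v i) (delta i) * mderiv i p =
    wcomp u (D - k + t) (delta i * mderiv i p).
  rewrite -(wcomp_mulr_wHomog u_nat _ _ (wHomog_mderiv u_nat (i := i) hom_p)).
  by congr wcomp; rewrite -(uv_k i); lia.
rewrite /der_app /der_comp; under eq_bigr do rewrite comp_term.
have hom_pe := wHomogX u_nat (e := e) hom_p.
by rewrite -wcomp_sum -/(der_app delta p) Ec -(wcomp_mulr_wHomog u_nat _ _ hom_pe) subrK.
Qed.

Hypothesis charK0 : [pchar K] =i pred0.

Lemma mpoly_mulrn_eq0 (p : S) k : (p *+ k == 0) = (k == 0)%N || (p == 0).
Proof.
rewrite -mulr_natr mulf_eq0 -mpolyC_nat mpolyC_eq0 orbC.
by rewrite ((pcharf0P _).1 charK0).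
Qed.

Lemma pwidth_weuler_shift (p : S) : (0 < pwidth (wemb p))%N ->
  weuler_shift w p != 0 /\ (pwidth (wemb (weuler_shift w p)) < pwidth (wemb p))%N.
Proof.
move=> w_gt0; have := coef_wemb_weuler_shift w p; move: (weuler_shift w p) => g coef_g.
have nz_P : wemb p != 0 by apply: contraTneq w_gt0 => ->; rewrite /pwidth size_poly0.
have size_P : size (wemb p) = (size (wemb p)).-1.+1 by rewrite prednK // size_poly_gt0.
move: coef_g w_gt0; set P := wemb p; set t := (size P).-1; set v := pval P => coef_g w_gt0.
have lt_vt : (v < t)%N by move: w_gt0; rewrite /pwidth -/t -/v; lia.
(* In characteristic 0 the bottom coefficient survives, scaled by [v - t]. *)
have nz_gv : (wemb g)`_v != 0.
  rewrite coef_g -opprB -mulrnBr ?(ltnW lt_vt) // oppr_eq0 mpoly_mulrn_eq0.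
  by rewrite negb_or -lt0n subn_gt0 lt_vt coef_pval_eq0.
have nz_g : g != 0 by rewrite -(wemb_eq0 w); apply: contraNneq nz_gv => ->; rewrite coef0.
split=> //.
have pval_g : pval (wemb g) = v.
  by apply: pval_eq => // j lt_jv; rewrite coef_g coef_lt_pval // !mul0rn subrr.
have size_g : (size (wemb g) <= t)%N.
  apply/leq_sizeP => j; rewrite leq_eqVlt => /orP[/eqP <-|lt_tj]; first by rewrite coef_g subrr.
  have le_Pj : (size P <= j)%N by rewrite size_P.
  by rewrite coef_g (nth_default _ le_Pj) !mul0rn subrr.
rewrite /pwidth pval_g -/t -/v; move: size_g lt_vt; clearbody t v.
by move: (size (wemb g)) => s; lia.
Qed.

Lemma not_mdvd_mul_weuler_shift (p h : S) : p != 0 -> ~ wHomogeneous u p ->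
  h != 0 -> wHomogeneous u h -> ~ mdvd p (h * weuler_shift w p).
Proof.
move=> nz_p Nhom_p nz_h hom_h [c Ehg].
have w_gt0 : (0 < pwidth (wemb p))%N.
  by rewrite lt0n; apply/eqP => w0; apply: Nhom_p; apply/(wHomogeneous_pwidth u_nat nz_p).
have [nz_g lt_w] := pwidth_weuler_shift w_gt0.
have nz_c : c != 0 by apply: contraTneq (mulf_neq0 nz_h nz_g) => c0; rewrite Ehg c0 mul0r eqxx.
move: (congr1 (fun q => pwidth (wemb q)) Ehg) lt_w; rewrite /= !wembM !pwidthM ?wemb_eq0 //.
by rewrite ((wHomogeneous_pwidth u_nat nz_h).1 hom_h); lia.
Qed.

Lemma wHomogeneous_of_graded_DQ (Q : S) : Q != 0 -> graded_DQ u (fun i => - u i) Q ->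
  wHomogeneous u Q.
Proof.
move=> nz_Q graded; apply: NNPP => Nhom_Q.
have [p [irr_p dvd_pQ Nhom_p]] := exists_irreducible_factor
  (fun c _ => ex_intro _ 0 (wHomogC u (c := c))) (wHomogeneousM u_nat) nz_Q Nhom_Q.
have [nz_p [Nunit_p _]] := irr_p.
have [k [k_gt0 dvd_pk Ndvd_pk1]] := exists_exact_power nz_Q (msize_gt1 nz_p Nunit_p) dvd_pQ.
pose delta : der K n := fun i => Q * ('X_i *+ w i).
have inD_delta : inDf Q delta.
  move=> q f _ _ [c Ec] _; exists (c * weuler w q).
  rewrite /der_app /weuler mulrAC -Ec mulr_sumr.
  by apply: eq_bigr => i _; rewrite mulrA.
pose T := (size (wemb Q)).-1.
have [c Ec] := graded delta inD_delta T p k irr_p k_gt0 dvd_pk Ndvd_pk1.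
have comp_delta : der_app (der_comp u (fun i => - u i) T delta) p = wcomp u T Q * weuler w p.
  rewrite /der_app /der_comp /weuler mulr_sumr; apply: eq_bigr => i _.
  have hom_Xi := wHomogMn (k := w i) (wHomog_mpolyXi (K := K) u_nat (i := i)).
  by rewrite opprK (wcomp_mulr_wHomog u_nat _ _ hom_Xi) mulrA.
have nz_QT : wcomp u T Q != 0.
  by rewrite (wcompE u_nat) -lead_coefE lead_coef_eq0 wemb_eq0.
(* [p] divides [Q_T * E(p)] by gradedness, and trivially [Q_T * top(p) * p]. *)
apply: (not_mdvd_mul_weuler_shift nz_p Nhom_p nz_QT).
  by exists T; apply: wHomog_wcomp.
rewrite /weuler_shift mulrBr; apply: mdvdB.
  by rewrite -comp_delta Ec; exists (c * p ^+ k.-1); rewrite -mulrA -exprSr prednK.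
by apply: mdvdMl; exists (size (wemb p)).-1%:R; rewrite mulr_natl.
Qed.

End Gradedness.

Theorem mainTheorem5 (K : fieldType) (n : nat)
  (charK0 : [pchar K] =i pred0)
  (Q : {mpoly K[n]}) (Q_neq0 : Q != 0)
  (u : 'I_n -> int) (u_pos : forall i, 0 < u i) :
  (exists d : int, is_wHomog u d Q) <->
  (forall v : 'I_n -> int, (exists k : int, forall i, u i + v i = k) ->
     graded_DQ u v Q).
Proof.
pose w i := `|u i|%N; have u_nat i : u i = w i by rewrite /w gtz0_abs.
split=> [[d hom_Q] v [k uv_k]|graded].
  exact: (graded_DQ_of_wHomog u_nat Q_neq0 hom_Q uv_k).
apply: (wHomogeneous_of_graded_DQ u_nat charK0 Q_neq0); apply: graded.
by exists 0 => i; rewrite addrN.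
Qed.
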